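(* Let $r>s\ge1$ be integers and let $n\ge1$ be an integer. Then the $(r,s)$-Bell number $\phi_n^{(r,s)}$ satisfies \[ \phi_n^{(r,s)}=\frac{(r-s)^{sn}}{e}\sum_{k=0}^{\infty}\frac{1}{k!}\prod_{l=1}^{s}\frac{\Gamma\!\big(n+\frac{k-l+1}{r-s}\big)}{\Gamma\!\big(\frac{k-l+1}{r-s}\big)}. \]
   Context: Let $D=\frac{d}{dx}$ and let $x$ denote the operator of multiplication by $x$. For integers $r\ge s\ge1$ and $n\ge1$, the generalized $(r,s)$-Stirling numbers of the second kind $S_{r,s}(n,k)$ (of Blasiak–Penson–Solomon) are defined by the normal ordering identity \[ (x^{r}D^{s})^{n}=x^{n(r-s)}\sum_{k=s}^{ns}S_{r,s}(n,k)\,x^{k}D^{k}, \] and the $(r,s)$-Bell numbers are $\phi_n^{(r,s)}=\sum_{k=s}^{ns}S_{r,s}(n,k)$. Here the ratio $\Gamma(n+a)/\Gamma(a)$ stands for the rising factorial $a(a+1)\cdots(a+n-1)$ (which is its value, or limiting value, also when $a$ is a nonpositive integer). *)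

From HB Require Import structures.
From mathcomp Require Import all_boot all_order all_algebra.
From mathcomp Require Import all_classical all_reals all_analysis.
Set Implicit Arguments. Unset Strict Implicit. Unset Printing Implicit Defensive.
Import Order.TTheory GRing.Theory Num.Theory.
Local Open Scope ring_scope.

Definition xrDs {R : realType} (r s : nat) (p : {poly R}) : {poly R} :=
  'X^r * p^`(s).

Definition is_rs_stirling {R : realType} (r s : nat) (S : nat -> nat -> R) :=
  forall (n : nat), (1 <= n)%N -> forall p : {poly R},
    iter n (xrDs r s) p =
    'X^(n * (r - s)) * \sum_(s <= k < (n * s).+1) S n k *: ('X^k * p^`(k)).

Definition rs_bell {R : realType} (s : nat) (S : nat -> nat -> R) (n : nat) : R :=
  \sum_(s <= k < (n * s).+1) S n k.

(* Rising factorial a (a+1) ... (a+n-1) = Gamma(n+a)/Gamma(a). *)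
Definition rising {R : realType} (a : R) (n : nat) : R := \prod_(i < n) (a + i%:R).

Definition bell_term {R : realType} (r s n : nat) (k : nat) : R :=
  (k`!%:R)^-1 * \prod_(1 <= l < s.+1)
     rising ((k%:R - l%:R + 1) / (r - s)%:R) n.

From HB Require Import structures.
From mathcomp Require Import all_boot all_order all_algebra.
From mathcomp Require Import all_classical all_reals all_analysis.
From mathcomp Require Import zify ring.
Set Implicit Arguments. Unset Strict Implicit. Unset Printing Implicit Defensive.
Import Order.TTheory GRing.Theory Num.Theory numFieldNormedType.Exports.
Local Open Scope classical_set_scope.
Local Open Scope ring_scope.

(** On the monomial x^k the operator x^r D^s acts by x^k |-> k^(s) x^(k+r-s),
    with k^(m) the falling factorial.  Applying the normal-ordering identity
    to x^k and comparing coefficients therefore gives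
      prod_(j<n) (k + j(r-s))^(s) = sum_m S(n,m) k^(m).
    The left side is (r-s)^(sn) k! times the k-th term of the series, and
    Dobinski's sum_k k^(m)/k! = e holds for every m; summing over k yields
    the series = (r-s)^(-sn) e phi_n. *)

Section normal_ordering.
Variables (R : realType) (r s : nat).
Hypothesis s_le_r : (s <= r)%N.

Lemma xrDsZ (c : R) (p : {poly R}) : xrDs r s (c *: p) = c *: xrDs r s p.
Proof. by rewrite /xrDs derivnZ scalerAr. Qed.

Lemma xrDs_Xn k : xrDs (R:=R) r s 'X^k = (k ^_ s)%:R *: 'X^(k + (r - s)).
Proof.
rewrite /xrDs derivnXn mulrnAr -exprD -scaler_nat.
have [le_sk|lt_ks] := leqP s k; first by congr (_ *: 'X^_); lia.
by rewrite ffact_small // !scale0r.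
Qed.

Lemma iter_xrDs_Xn n k :
  iter n (xrDs (R:=R) r s) 'X^k =
  (\prod_(j < n) (k + j * (r - s)) ^_ s)%:R *: 'X^(k + n * (r - s)).
Proof.
elim: n => [|n IHn]; first by rewrite big_ord0 scale1r mul0n addn0.
rewrite iterS IHn xrDsZ xrDs_Xn scalerA big_ord_recr /= natrM mulrC.
by congr (_ *: 'X^_); lia.
Qed.

Lemma rs_stirling_ffact (S : nat -> nat -> R) n k :
  (1 <= n)%N -> is_rs_stirling r s S ->
  (\prod_(j < n) (k + j * (r - s)) ^_ s)%:R =
  \sum_(s <= m < (n * s).+1) S n m * (k ^_ m)%:R.
Proof.
move=> n_ge1 /(_ n n_ge1 'X^k); rewrite iter_xrDs_Xn.
have -> : \sum_(s <= m < (n * s).+1) S n m *: ('X^m * ('X^k : {poly R})^`(m))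
    = (\sum_(s <= m < (n * s).+1) S n m * (k ^_ m)%:R) *: 'X^k.
  rewrite scaler_suml; apply: eq_bigr => m _.
  rewrite derivnXn mulrnAr -exprD -scaler_nat scalerA.
  have [le_mk|lt_km] := leqP m k; first by rewrite subnKC.
  by rewrite ffact_small // !mulr0 !scale0r.
rewrite -scalerAr -exprD => /(congr1 (fun p : {poly R} => p`_(k + n * (r - s)))).
by rewrite !coefZ !coefXn addnC eqxx !mulr1.
Qed.

End normal_ordering.

Lemma natr_ffact (R : comPzRingType) (m s : nat) :
  (m ^_ s)%:R = \prod_(1 <= l < s.+1) (m%:R - l%:R + 1 : R).
Proof.
elim: s m => [|s IHs] m; first by rewrite ffactn0 big_geq.
rewrite big_nat_recl // ffactnS natrM.
case: m => [|m]; first by rewrite !mul0r subrK mul0r.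
rewrite IHs /= subrK; congr (_ * _).
by apply: eq_bigr => l _; rewrite -(addn1 l) -(addn1 m) !natrD; ring.
Qed.

Lemma rising_div (R : realType) (a d : R) n : d != 0 ->
  rising (a / d) n = d^-1 ^+ n * \prod_(i < n) (a + i%:R * d).
Proof.
move=> d_neq0; rewrite /rising.
rewrite (eq_bigr (fun i : 'I_n => d^-1 * (a + i%:R * d))); last by move=> i _; field.
by rewrite big_split /= prodr_const card_ord.
Qed.

Lemma bell_term_ffact (R : realType) (r s n k : nat) : (s < r)%N ->
  bell_term (R:=R) r s n k =
  ((r - s)%:R ^+ (s * n))^-1 *
    ((\prod_(j < n) (k + j * (r - s)) ^_ s)%:R / k`!%:R).
Proof.
move=> lt_sr; set d : R := (r - s)%:R.
have d_neq0 : d != 0 by rewrite pnatr_eq0; lia.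
rewrite /bell_term.
suff -> : \prod_(1 <= l < s.+1) rising ((k%:R - l%:R + 1) / d) n =
    (d ^+ (s * n))^-1 * (\prod_(j < n) (k + j * (r - s)) ^_ s)%:R by ring.
under eq_bigr => l _ do rewrite rising_div //.
rewrite big_split /= prodr_const_nat subn1 /= -exprM mulnC exprVn; congr (_ * _).
rewrite exchange_big natr_prod; apply: eq_bigr => i _.
by rewrite natr_ffact; apply: eq_bigr => l _; rewrite natrD natrM; ring.
Qed.

Lemma cvg_series_ffact_div_fact (R : realType) (m : nat) :
  series (fun k => (k ^_ m)%:R / k`!%:R : R) @ \oo --> expR 1.
Proof.
rewrite -(cvg_shiftn m).
suff -> : [sequence series (fun k => (k ^_ m)%:R / k`!%:R : R) (N + m)%N]_N
    = series (exp_coeff 1) by exact: is_cvg_series_exp_coeff.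
apply/funext => N /=; rewrite series_addn.
have -> : series (fun k => (k ^_ m)%:R / k`!%:R : R) m = 0.
  rewrite seriesEnat /=; apply: big1_seq => k /andP[_].
  by rewrite mem_index_iota => /andP[_ lt_km]; rewrite ffact_small // mul0r.
rewrite add0r seriesEnat /= -{1}(add0n m) big_addn addnK.
apply: eq_bigr => k _; rewrite /exp_coeff /= expr1n.
rewrite -(ffact_fact (leq_addl k m)) addnK natrM invfM mulrA divff ?mul1r //.
by rewrite pnatr_eq0 -lt0n ffact_gt0 leq_addl.
Qed.

Lemma series_bell_term (R : realType) (r s n : nat) (S : nat -> nat -> R) :
  (s < r)%N -> (1 <= n)%N -> is_rs_stirling r s S ->
  series (bell_term (R:=R) r s n) =
  (fun N => ((r - s)%:R ^+ (s * n))^-1 * \sum_(s <= m < (n * s).+1)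
     S n m * series (fun k => (k ^_ m)%:R / k`!%:R : R) N).
Proof.
move=> lt_sr n_ge1 HS; apply/funext => N; rewrite seriesEnat /=.
under eq_bigr do rewrite bell_term_ffact // (rs_stirling_ffact (ltnW lt_sr) _ n_ge1 HS).
rewrite -mulr_sumr; congr (_ * _).
rewrite (eq_bigr (fun k => \sum_(s <= m < (n * s).+1) S n m * (k ^_ m)%:R / k`!%:R));
  last by move=> k _; rewrite mulr_suml.
rewrite exchange_big /=; apply: eq_bigr => m _.
by rewrite seriesEnat /= mulr_sumr; apply: eq_bigr => k _; rewrite mulrA.
Qed.

Theorem theorem2 (R : realType) (r s n : nat) (S : nat -> nat -> R) :
  (s < r)%N -> (1 <= s)%N -> (1 <= n)%N -> is_rs_stirling r s S ->
  cvgn (series (bell_term (R:=R) r s n)) /\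
  rs_bell s S n =
    ((r - s)%:R ^+ (s * n) / expR 1) * limn (series (bell_term (R:=R) r s n)).
Proof.
move=> lt_sr _ n_ge1 HS.
set c : R := (r - s)%:R ^+ (s * n).
have c_neq0 : c != 0 by rewrite expf_neq0 // pnatr_eq0; lia.
have e_neq0 : expR 1 != 0 :> R by rewrite gt_eqF // expR_gt0.
have cvg_bell : series (bell_term (R:=R) r s n) @ \oo -->
    c^-1 * \sum_(s <= m < (n * s).+1) S n m * expR 1.
  rewrite (series_bell_term lt_sr n_ge1 HS); apply: cvgMl_tmp.
  apply: cvg_big; first exact: add_continuous.
  by move=> m _; apply: cvgMl_tmp; exact: cvg_series_ffact_div_fact.
split; first exact: cvgP cvg_bell.
rewrite (cvg_lim _ cvg_bell) // /rs_bell -mulr_suml.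
by field; apply/andP.
Qed.
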